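(* Consider the wound-string system $\ddot x_1+2G^1(x,\dot x)=0$, $\ddot x_2+2G^2(x,\dot x)=0$ with $$G^1=\frac{x_1}{2a^2x_1^2+2m^2x_2^2}\Big[a^2(1-y_1^2)-y_2^2-C^2\frac{(a^2x_1^2+m^2x_2^2)^2}{x_1^4x_2^2}\Big],\quad G^2=\frac{x_2}{2a^2x_1^2+2m^2x_2^2}\Big[m^2\big(a^2(1-y_1^2)-y_2^2\big)-a^2C^2\frac{(a^2x_1^2+m^2x_2^2)^2}{x_1^2x_2^4}\Big],$$ where $y_i=\dot x_i$ and $a,C,m$ are real parameters with $0<a^2\le 1$. Then for no such parameter values does the system have exactly one, exactly two, or exactly three Jacobi stable fixed points; and whenever $m\neq0$, $C\neq 0$ and $a^2\neq 1$, the system has exactly four Jacobi stable fixed points.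
   Context: Fixed points are points $(x_1,x_2)$ with $x_1\neq0$, $x_2\neq0$ such that $G^1(x,0)=G^2(x,0)=0$. Einstein summation is used. $N^i_j=\partial G^i/\partial y_j$, $G^i_{j\ell}=\partial N^i_j/\partial y_\ell$, and the deviation curvature tensor is $P^i_j=-2\frac{\partial G^i}{\partial x_j}-2G^\ell G^i_{j\ell}+y_\ell\frac{\partial N^i_j}{\partial x_\ell}+N^i_\ell N^\ell_j$. A fixed point $\bar x$ is Jacobi stable if all eigenvalues of the $2\times2$ matrix $(P^i_j)$ evaluated at $(x,y)=(\bar x,0)$ have strictly negative real parts. *)

From Stdlib Require Import Reals List.
From Coquelicot Require Import Coquelicot.
Import ListNotations.
Open Scope R_scope.

(* Functions of (x1, x2, y1, y2). *)
Definition F4 := R -> R -> R -> R -> R.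

Definition dx (j : nat) (f : F4) : F4 := fun x1 x2 y1 y2 =>
  match j with
  | 1%nat => Derive (fun t => f t x2 y1 y2) x1
  | _ => Derive (fun t => f x1 t y1 y2) x2
  end.
Definition dy (j : nat) (f : F4) : F4 := fun x1 x2 y1 y2 =>
  match j with
  | 1%nat => Derive (fun t => f x1 x2 t y2) y1
  | _ => Derive (fun t => f x1 x2 y1 t) y2
  end.

Definition sum12 (g : nat -> R) : R := g 1%nat + g 2%nat.

Definition G1 (a c m : R) : F4 := fun x1 x2 y1 y2 =>
  x1 / (2 * a^2 * x1^2 + 2 * m^2 * x2^2) *
  (a^2 * (1 - y1^2) - y2^2
   - c^2 * (a^2 * x1^2 + m^2 * x2^2)^2 / (x1^4 * x2^2)).
Definition G2 (a c m : R) : F4 := fun x1 x2 y1 y2 =>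
  x2 / (2 * a^2 * x1^2 + 2 * m^2 * x2^2) *
  (m^2 * (a^2 * (1 - y1^2) - y2^2)
   - a^2 * c^2 * (a^2 * x1^2 + m^2 * x2^2)^2 / (x1^2 * x2^4)).

Definition G (a c m : R) (i : nat) : F4 :=
  match i with 1%nat => G1 a c m | _ => G2 a c m end.

Definition yv (l : nat) (y1 y2 : R) : R :=
  match l with 1%nat => y1 | _ => y2 end.

Definition N (a c m : R) (i j : nat) : F4 := dy j (G a c m i).
Definition Gc (a c m : R) (i j l : nat) : F4 := dy l (N a c m i j).

Definition P (a c m : R) (i j : nat) : F4 := fun x1 x2 y1 y2 =>
  - 2 * dx j (G a c m i) x1 x2 y1 y2
  - 2 * sum12 (fun l => G a c m l x1 x2 y1 y2 * Gc a c m i j l x1 x2 y1 y2)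
  + sum12 (fun l => yv l y1 y2 * dx l (N a c m i j) x1 x2 y1 y2)
  + sum12 (fun l => N a c m i l x1 x2 y1 y2 * N a c m l j x1 x2 y1 y2).

Definition fixed_point (a c m : R) (p : R * R) : Prop :=
  fst p <> 0 /\ snd p <> 0 /\
  G1 a c m (fst p) (snd p) 0 0 = 0 /\ G2 a c m (fst p) (snd p) 0 0 = 0.

Definition is_eigenvalue_P (a c m : R) (p : R * R) (lam : C) : Prop :=
  let Pij i j := RtoC (P a c m i j (fst p) (snd p) 0 0) in
  Cminus (Cmult (Cminus (Pij 1%nat 1%nat) lam) (Cminus (Pij 2%nat 2%nat) lam))
         (Cmult (Pij 1%nat 2%nat) (Pij 2%nat 1%nat)) = RtoC 0.

Definition jacobi_stable (a c m : R) (p : R * R) : Prop :=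
  forall lam : C, is_eigenvalue_P a c m p lam -> Re lam < 0.

Definition jacobi_stable_fixed_point (a c m : R) (p : R * R) : Prop :=
  fixed_point a c m p /\ jacobi_stable a c m p.

Definition exactly_k_stable (a c m : R) (k : nat) : Prop :=
  exists l : list (R * R), NoDup l /\ length l = k /\
    forall p, In p l <-> jacobi_stable_fixed_point a c m p.

From Pilot Require Import Defs.
From Stdlib Require Import Reals List Permutation Lra Lia.
From Coquelicot Require Import Coquelicot.
Import ListNotations.
Open Scope R_scope.

(* At y = 0 the fixed-point equations G^1 = G^2 = 0 reduce to
   a^2 x1^2 = m^2 x2^2 and x2^2 = 4 c^2 a^2, so the fixed points are exactly
   (±2cm, ±2ca): four distinct points when c, m <> 0 and none otherwise.
   Since G^i is even in y, N^i_j vanishes at rest, and at a fixed point the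
   G-term of P vanishes too; hence P = -2 dG/dx there, which turns out to be
   diag(-1/x1^2, -a^2/x2^2). Every fixed point is therefore Jacobi stable, and
   the number of Jacobi stable fixed points is 0 or 4. *)

Ltac nonzero :=
  repeat split; try exact I;
  first [ repeat apply Rmult_integral_contrapositive_currified; (assumption || lra)
        | apply Rgt_not_eq; nra ].

Lemma Re_eigenvalue_lt0_2x2 (p11 p12 p21 p22 : R) (lam : C) :
  p11 + p22 < 0 -> 0 < p11 * p22 - p12 * p21 ->
  Cminus (Cmult (Cminus (RtoC p11) lam) (Cminus (RtoC p22) lam))
         (Cmult (RtoC p12) (RtoC p21)) = RtoC 0 ->
  Re lam < 0.
Proof.
  intros htr hdet heq. destruct lam as [u v].
  unfold Cminus, Cmult, Copp, Cplus, RtoC, Re in *; simpl in *.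
  injection heq as hre him.
  assert (hv : v * (2 * u - (p11 + p22)) = 0) by lra.
  apply Rmult_integral in hv as [-> | hu]; [nra | lra].
Qed.

Lemma G1_at_rest_scaled a c m x1 x2 : a <> 0 -> x1 <> 0 -> x2 <> 0 ->
  a^2*x1^4*x2^2 - c^2*(a^2*x1^2 + m^2*x2^2)^2
  = 2*(a^2*x1^2 + m^2*x2^2)*x1^3*x2^2 * G1 a c m x1 x2 0 0.
Proof.
  intros ha hx1 hx2.
  assert (0 < a^2) by (apply pow2_gt_0; auto).
  assert (0 < x1^2) by (apply pow2_gt_0; auto).
  assert (0 <= m^2) by apply pow2_ge_0.
  assert (0 <= x2^2) by apply pow2_ge_0.
  unfold G1. field. nonzero.
Qed.

Lemma G2_at_rest_scaled a c m x1 x2 : a <> 0 -> x1 <> 0 -> x2 <> 0 ->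
  m^2*x1^2*x2^4 - c^2*(a^2*x1^2 + m^2*x2^2)^2
  = 2*(a^2*x1^2 + m^2*x2^2)*x1^2*x2^3/a^2 * G2 a c m x1 x2 0 0.
Proof.
  intros ha hx1 hx2.
  assert (0 < a^2) by (apply pow2_gt_0; auto).
  assert (0 < x1^2) by (apply pow2_gt_0; auto).
  assert (0 <= m^2) by apply pow2_ge_0.
  assert (0 <= x2^2) by apply pow2_ge_0.
  unfold G2. field. nonzero.
Qed.

Lemma fixed_point_iff a c m x1 x2 : 0 < a^2 ->
  fixed_point a c m (x1, x2) <->
  x1 <> 0 /\ x2 <> 0 /\ c^2 = x2^2 / (4*a^2) /\ m^2 = a^2*x1^2 / x2^2.
Proof.
  intros ha2.
  assert (ha : a <> 0) by (intros ->; lra).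
  unfold fixed_point; cbn [fst snd]. split.
  - intros (hx1 & hx2 & hG1 & hG2).
    assert (0 < x1^2) by (apply pow2_gt_0; auto).
    assert (0 < x2^2) by (apply pow2_gt_0; auto).
    pose proof (G1_at_rest_scaled a c m x1 x2 ha hx1 hx2) as e1.
    pose proof (G2_at_rest_scaled a c m x1 x2 ha hx1 hx2) as e2.
    rewrite hG1, Rmult_0_r in e1. rewrite hG2, Rmult_0_r in e2.
    assert (hm : a^2*x1^2 = m^2*x2^2).
    { assert (hz : x1^2*x2^2 * (a^2*x1^2 - m^2*x2^2) = 0) by nra.
      apply Rmult_integral in hz as [hz | hz]; [nra | lra]. }
    assert (hc : x2^2 = 4*c^2*a^2).
    { apply (Rmult_eq_reg_l (a^2*x1^4)); [| nonzero].
      rewrite <- hm in e1. nra. }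
    repeat split; auto; [rewrite hc | rewrite hm]; field; auto.
  - intros (hx1 & hx2 & hc & hm).
    assert (0 < a*a) by (apply Rsqr_pos_lt; auto).
    assert (0 < x1*x1) by (apply Rsqr_pos_lt; auto).
    unfold G1, G2. rewrite hc, hm.
    repeat split; auto; field; nonzero.
Qed.

Lemma N_at_rest_eq0 a c m i j x1 x2 : a <> 0 -> x1 <> 0 -> x2 <> 0 ->
  Defs.N a c m i j x1 x2 0 0 = 0.
Proof.
  intros ha hx1 hx2.
  assert (0 < a*a) by (apply Rsqr_pos_lt; auto).
  assert (0 < x1*x1) by (apply Rsqr_pos_lt; auto).
  assert (0 <= m*m) by apply Rle_0_sqr.
  assert (0 <= x2*x2) by apply Rle_0_sqr.
  unfold Defs.N, dy.
  destruct i as [|[|i]], j as [|[|j]]; cbn [G]; apply is_derive_unique;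
    unfold G1, G2; auto_derive; first [nonzero | field; nonzero].
Qed.

Section AtFixedPoint.

Variables a c m x1 x2 : R.
Hypotheses (ha : a <> 0) (hx1 : x1 <> 0) (hx2 : x2 <> 0)
  (hc : c^2 = x2^2 / (4*a^2)) (hm : m^2 = a^2*x1^2 / x2^2).

Local Ltac solve_derive :=
  assert (0 < a*a) by (apply Rsqr_pos_lt; auto);
  assert (0 < x1*x1) by (apply Rsqr_pos_lt; auto);
  assert (0 < x2*x2) by (apply Rsqr_pos_lt; auto);
  assert (0 <= m*m) by apply Rle_0_sqr;
  auto_derive;
  [ nonzero
  | change (c*(c*1)) with (c^2); change (m*(m*1)) with (m^2);
    rewrite hc, hm; field; nonzero ].

Lemma Derive_G1_x1 : Derive (fun t => G1 a c m t x2 0 0) x1 = 1 / (2*x1^2).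
Proof. apply is_derive_unique. unfold G1. solve_derive. Qed.

Lemma Derive_G1_x2 : Derive (fun t => G1 a c m x1 t 0 0) x2 = 0.
Proof. apply is_derive_unique. unfold G1. solve_derive. Qed.

Lemma Derive_G2_x1 : Derive (fun t => G2 a c m t x2 0 0) x1 = 0.
Proof. apply is_derive_unique. unfold G2. solve_derive. Qed.

Lemma Derive_G2_x2 : Derive (fun t => G2 a c m x1 t 0 0) x2 = a^2 / (2*x2^2).
Proof. apply is_derive_unique. unfold G2. solve_derive. Qed.

Lemma P_at_fixed_point :
  P a c m 1 1 x1 x2 0 0 = - 1 / x1^2 /\ P a c m 1 2 x1 x2 0 0 = 0 /\
  P a c m 2 1 x1 x2 0 0 = 0 /\ P a c m 2 2 x1 x2 0 0 = - a^2 / x2^2.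
Proof.
  assert (0 < a^2) by (apply pow2_gt_0; auto).
  assert (hfix : fixed_point a c m (x1, x2)) by (apply fixed_point_iff; auto).
  destruct hfix as (_ & _ & hG1 & hG2); cbn [fst snd] in *.
  unfold P, sum12, dx; cbn [G yv].
  rewrite hG1, hG2, !N_at_rest_eq0 by auto.
  rewrite Derive_G1_x1, Derive_G1_x2, Derive_G2_x1, Derive_G2_x2.
  repeat split; field; auto.
Qed.

End AtFixedPoint.

Lemma fixed_point_jacobi_stable a c m p : 0 < a^2 ->
  fixed_point a c m p -> jacobi_stable a c m p.
Proof.
  intros ha2 hfix lam. destruct p as [x1 x2].
  apply fixed_point_iff in hfix as (hx1 & hx2 & hc & hm); auto.
  assert (ha : a <> 0) by (intros ->; lra).
  assert (0 < x1^2) by (apply pow2_gt_0; auto).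
  assert (0 < x2^2) by (apply pow2_gt_0; auto).
  unfold is_eigenvalue_P; cbn [fst snd].
  destruct (P_at_fixed_point a c m x1 x2) as (-> & -> & -> & ->); auto.
  apply Re_eigenvalue_lt0_2x2.
  - assert (0 < 1 / x1^2) by (apply Rdiv_lt_0_compat; lra).
    assert (0 < a^2 / x2^2) by (apply Rdiv_lt_0_compat; lra).
    unfold Rdiv in *; lra.
  - replace (- 1 / x1^2 * (- a^2 / x2^2) - 0 * 0) with (a^2 / (x1^2 * x2^2))
      by (field; auto).
    apply Rdiv_lt_0_compat; nra.
Qed.

Lemma jacobi_stable_fixed_point_iff a c m p : 0 < a^2 ->
  jacobi_stable_fixed_point a c m p <-> fixed_point a c m p.
Proof.
  intros ha2. split; [now intros [hfix _] |].
  intros hfix. split; auto using fixed_point_jacobi_stable.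
Qed.

Definition fixed_point_candidates (a c m : R) : list (R * R) :=
  [(2*c*m, 2*c*a); (2*c*m, -(2*c*a)); (-(2*c*m), 2*c*a); (-(2*c*m), -(2*c*a))].

Lemma fixed_point_params_neq0 a c m p : 0 < a^2 ->
  fixed_point a c m p -> c <> 0 /\ m <> 0.
Proof.
  intros ha2 hfix. destruct p as [x1 x2].
  apply fixed_point_iff in hfix as (hx1 & hx2 & hc & hm); auto.
  assert (0 < x1^2) by (apply pow2_gt_0; auto).
  assert (0 < x2^2) by (apply pow2_gt_0; auto).
  split; intros ->.
  - assert (0 < x2^2 / (4*a^2)) by (apply Rdiv_lt_0_compat; lra).
    rewrite pow_i in hc by lia. lra.
  - assert (0 < a^2*x1^2 / x2^2) by (apply Rdiv_lt_0_compat; nra).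
    rewrite pow_i in hm by lia. lra.
Qed.

Lemma In_fixed_point_candidates a c m p : 0 < a^2 -> c <> 0 -> m <> 0 ->
  In p (fixed_point_candidates a c m) <-> fixed_point a c m p.
Proof.
  intros ha2 hc hm. destruct p as [x1 x2].
  assert (ha : a <> 0) by (intros ->; lra).
  rewrite fixed_point_iff by auto. split.
  - intros hin.
    assert (2*c*m <> 0 /\ 2*c*a <> 0) as [hcm hca] by nonzero.
    unfold fixed_point_candidates in hin; simpl in hin.
    repeat destruct hin as [[= <- <-] | hin]; try contradiction;
      repeat split; try apply Ropp_neq_0_compat; auto; field; auto.
  - intros (hx1 & hx2 & hc2 & hm2).
    assert (e1 : x1² = (2*c*m)²).
    { rewrite !Rsqr_pow2. replace ((2*c*m)^2) with (4 * c^2 * m^2) by ring. rewrite hc2, hm2. field. nonzero. }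
    assert (e2 : x2² = (2*c*a)²).
    { rewrite !Rsqr_pow2. replace ((2*c*a)^2) with (4 * c^2 * a^2) by ring. rewrite hc2. field. nonzero. }
    unfold fixed_point_candidates; simpl.
    destruct (Rsqr_eq _ _ e1) as [-> | ->], (Rsqr_eq _ _ e2) as [-> | ->];
      tauto.
Qed.

Lemma fixed_point_candidates_NoDup a c m : a <> 0 -> c <> 0 -> m <> 0 ->
  NoDup (fixed_point_candidates a c m).
Proof.
  intros ha hc hm.
  assert (2*c*m <> 0 /\ 2*c*a <> 0) as [hcm hca] by nonzero.
  unfold fixed_point_candidates.
  repeat constructor; simpl; intuition;
    match goal with h : (_, _) = (_, _) |- _ => injection h; lra end.
Qed.

Lemma exactly_k_stable_0_or_4 a c m k : 0 < a^2 ->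
  exactly_k_stable a c m k -> k = 0%nat \/ k = 4%nat.
Proof.
  intros ha2 (l & hnodup & hlen & hl).
  destruct l as [| p l']; [left; now subst |]. right.
  assert (hfix : fixed_point a c m p)
    by (apply (jacobi_stable_fixed_point_iff a c m p ha2), hl; now left).
  destruct (fixed_point_params_neq0 a c m p ha2 hfix) as [hc hm].
  assert (ha : a <> 0) by (intros ->; lra).
  rewrite <- hlen. change 4%nat with (length (fixed_point_candidates a c m)).
  apply Permutation_length, NoDup_Permutation;
    auto using fixed_point_candidates_NoDup.
  intros q. rewrite hl, jacobi_stable_fixed_point_iff, In_fixed_point_candidates by auto.
  reflexivity.
Qed.

Lemma exactly_4_stable a c m : 0 < a^2 -> c <> 0 -> m <> 0 ->
  exactly_k_stable a c m 4.
Proof.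
  intros ha2 hc hm.
  assert (ha : a <> 0) by (intros ->; lra).
  exists (fixed_point_candidates a c m).
  split; [now apply fixed_point_candidates_NoDup | split; [reflexivity |]].
  intros p. rewrite jacobi_stable_fixed_point_iff by auto.
  now apply In_fixed_point_candidates.
Qed.

Theorem theorem4p1 :
  forall a c m : R, 0 < a^2 -> a^2 <= 1 ->
    ~ exactly_k_stable a c m 1 /\ ~ exactly_k_stable a c m 2 /\
    ~ exactly_k_stable a c m 3 /\
    (m <> 0 -> c <> 0 -> a^2 <> 1 -> exactly_k_stable a c m 4).
Proof.
  intros a c m ha2 _.
  repeat split;
    try (intros h; apply exactly_k_stable_0_or_4 in h; [lia | assumption]).
  intros hm hc _. now apply exactly_4_stable.
Qed.
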